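(* Let $\mathcal A$ be a completely positive trace-preserving map on $M_D$ and let $\mathcal B,\mathcal C,\mathcal D$ be completely positive maps on $M_D$ with $\epsilon=\max(\|\mathcal B\|_{1\to1},\|\mathcal C\|_{1\to1},\|\mathcal D\|_{1\to1})$. Define the double-step maps $\mathcal A'=(\mathcal A^2+\mathcal B^2)^2+(\mathcal C^2+\mathcal D^2)^2$, $\mathcal B'=\{\mathcal A,\mathcal B\}^2+\{\mathcal C,\mathcal D\}^2$, $\mathcal C'=\{\mathcal A^2+\mathcal B^2,\mathcal C^2+\mathcal D^2\}$, $\mathcal D'=\{\{\mathcal A,\mathcal B\},\{\mathcal C,\mathcal D\}\}$. Then: 1. $\max(\|\mathcal B'\|_{1\to1},\|\mathcal C'\|_{1\to1},\|\mathcal D'\|_{1\to1})\le 4(\epsilon^2+\epsilon^4)$. 2. $\|\mathcal A'-\mathcal A^4\|_{1\to1}\le 2\epsilon^2+5\epsilon^4$. 3. Suppose in addition that $\lambda$ is the spectral radius of $\mathcal A'$ and that $\xi$ is positive definite with $\mathcal A'^\dagger(\xi)=\lambda\xi$. Then $\lambda\ge1$, and the regauged maps $\mathcal X_{\rm new}=\lambda^{-1}\mathcal S\mathcal X'\mathcal S^{-1}$, with $\mathcal S(\rho)=\xi^{1/2}\rho\,\xi^{1/2}$, satisfy $$\max(\|\mathcal B_{\rm new}\|_{1\to1},\|\mathcal C_{\rm new}\|_{1\to1},\|\mathcal D_{\rm new}\|_{1\to1})\le 4\,\kappa(\mathcal S)\,(\epsilon^2+\epsilon^4),$$ where $\kappa(\mathcal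 S)=\|\mathcal S\|_{1\to1}\|\mathcal S^{-1}\|_{1\to1}$.
   Context: Notation: $M_D$ is the space of complex $D\times D$ matrices. For a linear map $\mathcal F$ on $M_D$, $\|\mathcal F\|_{1\to1}:=\sup_{\sigma\ne0}\|\mathcal F(\sigma)\|_1/\|\sigma\|_1$, where $\|\cdot\|_1$ is the trace norm. The dual map $\mathcal F^\dagger$ is defined by $\mathrm{Tr}(A\,\mathcal F(B))=\mathrm{Tr}(\mathcal F^\dagger(A)B)$. Products of maps denote composition and $\{\mathcal X,\mathcal Y\}=\mathcal X\mathcal Y+\mathcal Y\mathcal X$. *)

From HB Require Import structures.
From mathcomp Require Import all_boot all_order all_algebra.
Set Implicit Arguments. Unset Strict Implicit. Unset Printing Implicit Defensive.
Import Order.TTheory GRing.Theory Num.Theory.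
Local Open Scope ring_scope.

Section Defs.
Variables (C : numClosedFieldType) (D : nat).

Definition adjmx (A : 'M[C]_D) : 'M[C]_D := (map_mx Num.conj A)^T.

Definition eigs (M : 'M[C]_D) : seq C := projT1 (closed_field_poly_normal (char_poly M)).

(* trace norm: sum of the singular values, i.e. of sqrt of eigenvalues of A^* A *)
Definition trnorm (A : 'M[C]_D) : C := \sum_(x <- eigs (adjmx A *m A)) sqrtC x.

Definition psd (A : 'M[C]_D) : Prop :=
  forall v : 'cV[C]_D, 0 <= (((map_mx Num.conj v)^T *m A *m v) 0 0).
Definition posdef (A : 'M[C]_D) : Prop :=
  forall v : 'cV[C]_D, v != 0 -> 0 < (((map_mx Num.conj v)^T *m A *m v) 0 0).

Definition mapT := 'M[C]_D -> 'M[C]_D.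
Definition lin_map (F : mapT) : Prop :=
  forall (a : C) (x y : 'M[C]_D), F (a *: x + y) = a *: F x + F y.
Definition addm (F G : mapT) : mapT := fun x => F x + G x.
Definition subm (F G : mapT) : mapT := fun x => F x - G x.
Definition compm (F G : mapT) : mapT := fun x => F (G x).
Definition anticomm (F G : mapT) : mapT := addm (compm F G) (compm G F).
Definition sqm (F : mapT) : mapT := compm F F.

(* an element of M_D (x) M_k written as a k x k array of D x D blocks is PSD *)
Definition psd_block (k : nat) (X : 'I_k -> 'I_k -> 'M[C]_D) : Prop :=
  forall v : 'I_k -> 'cV[C]_D,
    0 <= \sum_(i < k) \sum_(j < k)
           (((map_mx Num.conj (v i))^T *m X i j *m v j) 0 0).

(* complete positivity: F (x) id_k is positive for every k *)
Definition CP (F : mapT) : Prop :=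
  lin_map F /\
  forall (k : nat) (X : 'I_k -> 'I_k -> 'M[C]_D),
    psd_block X -> psd_block (fun i j => F (X i j)).

Definition trace_preserving (F : mapT) : Prop := forall x, \tr (F x) = \tr x.

(* dual map: Tr(Y F(B)) = Tr(F^dag(Y) B); explicit matrix of F^dag(Y) *)
Definition dualm (F : mapT) : mapT :=
  fun Y => \matrix_(i, j) \tr (Y *m F (delta_mx j i)).

Definition norm11_le (F : mapT) (c : C) : Prop :=
  forall s : 'M[C]_D, trnorm (F s) <= c * trnorm s.

Definition is_norm11 (F : mapT) (c : C) : Prop :=
  0 <= c /\ norm11_le F c /\ (forall c', 0 <= c' -> norm11_le F c' -> c <= c').

Definition is_eigenvalue (F : mapT) (l : C) : Prop :=
  exists X : 'M[C]_D, X != 0 /\ F X = l *: X.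

Definition is_spectral_radius (F : mapT) (r : C) : Prop :=
  (exists l, is_eigenvalue F l /\ `|l| = r) /\
  (forall l, is_eigenvalue F l -> `|l| <= r).

End Defs.

From HB Require Import structures.
From mathcomp Require Import all_boot all_order all_algebra.
From mathcomp Require Import ring.
Import Order.TTheory GRing.Theory Num.Theory.
Local Open Scope ring_scope.

Set Implicit Arguments. Unset Strict Implicit. Unset Printing Implicit Defensive.

(* The trace norm is dual to the operator norm: ||X||_1 = max |tr(G X)| over
   contractions G.  This gives the triangle inequality, hence the calculus of
   ||.||_{1->1} bounds under sums and compositions, from which parts 1 and 2
   follow once ||A||_{1->1} <= 1.  For the latter, write X = sum_k a_k b_k^*
   with |a_k|^2 = |b_k|^2 = sigma_k (singular values); positivity of
   (A (x) id_2) on the rank-one block matrix built from a and b bounds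
   |tr(G A(a b^* ))| by (|a|^2 + |b|^2)/2.  For part 3, A' = A^4 + R with A^4
   trace preserving and R positive, and evaluating A'^dag(xi) = lam xi against
   a least eigenvector of xi gives lam >= 1; the regauged bounds then follow
   from part 1 and submultiplicativity. *)

Lemma sqrtCV_mul (C : numClosedFieldType) (x : C) : (sqrtC x)^-1 * x = sqrtC x.
Proof.
have [->|xn0] := eqVneq x 0; first by rewrite mulr0 sqrtC0.
by rewrite -{2}(sqrtCK x) expr2 mulKf // sqrtC_eq0.
Qed.

Section ConjTranspose.
Variable C : numClosedFieldType.

Definition ctmx m n (A : 'M[C]_(m, n)) : 'M[C]_(n, m) := (map_mx Num.conj A)^T.

Lemma ctmxE m n (A : 'M[C]_(m, n)) i j : ctmx A i j = (A j i)^*.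
Proof. by rewrite !mxE. Qed.

Lemma ctmxK m n (A : 'M[C]_(m, n)) : ctmx (ctmx A) = A.
Proof. by apply/matrixP=> i j; rewrite !mxE conjCK. Qed.

Lemma ctmxM m n p (A : 'M[C]_(m, n)) (B : 'M[C]_(n, p)) :
  ctmx (A *m B) = ctmx B *m ctmx A.
Proof. by rewrite /ctmx map_mxM trmx_mul. Qed.

Lemma ctmxD m n (A B : 'M[C]_(m, n)) : ctmx (A + B) = ctmx A + ctmx B.
Proof. by apply/matrixP=> i j; rewrite !mxE rmorphD. Qed.

Lemma ctmxZ m n a (A : 'M[C]_(m, n)) : ctmx (a *: A) = a^* *: ctmx A.
Proof. by apply/matrixP=> i j; rewrite !mxE rmorphM. Qed.

Lemma ctmx0 m n : ctmx (0 : 'M[C]_(m, n)) = 0.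
Proof. by apply/matrixP=> i j; rewrite !mxE rmorph0. Qed.

Lemma ctmx_scalar n (c : C) : ctmx (c%:M : 'M[C]_n) = c^*%:M.
Proof.
by apply/matrixP=> i j; rewrite !mxE eq_sym; case: (i == j); rewrite ?rmorph0.
Qed.

Lemma ctmx1 n : ctmx (1%:M : 'M[C]_n) = 1%:M.
Proof. by rewrite ctmx_scalar rmorph1. Qed.

Lemma ctmx_diag n (d : 'rV[C]_n) : ctmx (diag_mx d) = diag_mx (map_mx Num.conj d).
Proof. by rewrite /ctmx map_diag_mx tr_diag_mx. Qed.

Lemma ctmx_trmxC m n (A : 'M[C]_(m, n)) : ctmx A = map_mx Num.conj A^T.
Proof. by rewrite /ctmx map_trmx. Qed.

Lemma diag_mxM n (a b : 'rV[C]_n) :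
  diag_mx a *m diag_mx b = diag_mx (\row_k (a 0 k * b 0 k)).
Proof.
apply/matrixP=> i j; rewrite mul_diag_mx !mxE.
by case: eqP => [->|]; rewrite ?mulr1n ?mulr0n ?mulr0.
Qed.

Lemma gramZ m n a (X : 'M[C]_(m, n)) k :
  (ctmx (a *: X) *m (a *: X)) k k = a^* * a * (ctmx X *m X) k k.
Proof. by rewrite ctmxZ -scalemxAl -scalemxAr scalerA mxE. Qed.

Lemma gram_diag_ge0 m n (X : 'M[C]_(m, n)) k : 0 <= (ctmx X *m X) k k.
Proof.
rewrite !mxE; apply: sumr_ge0 => j _; rewrite !mxE mulrC; exact: mul_conjC_ge0.
Qed.

Lemma gram_diag_eq0 m n (X : 'M[C]_(m, n)) k :
  (ctmx X *m X) k k = 0 -> col k X = 0.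
Proof.
rewrite !mxE => /eqP; rewrite psumr_eq0 => [/allP X0|j _]; last first.
  by rewrite !mxE mulrC mul_conjC_ge0.
apply/matrixP=> i j; rewrite !mxE.
by have /= := X0 i (mem_index_enum _); rewrite !mxE mulrC mul_conjC_eq0 => /eqP.
Qed.

Lemma ctmx_delta m n (i : 'I_m) (j : 'I_n) : ctmx (delta_mx i j) = delta_mx j i.
Proof. by apply/matrixP=> k l; rewrite !mxE rmorph_nat andbC. Qed.

Lemma cV_gram_eq0 n (v : 'cV[C]_n) : (ctmx v *m v) 0 0 = 0 -> v = 0.
Proof.
move/gram_diag_eq0 => /matrixP v0; apply/matrixP=> i j.
by rewrite (ord1 j); have := v0 i 0; rewrite !mxE.
Qed.

Lemma form_delta n (M : 'M[C]_n) a b :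
  (ctmx (delta_mx a 0 : 'cV[C]_n) *m M *m (delta_mx b 0 : 'cV[C]_n)) 0 0 = M a b.
Proof. by rewrite ctmx_delta -(rowE a M) -(colE b (row a M)) !mxE. Qed.

Lemma form_unit_delta n (W : 'M[C]_n) k :
  ctmx W *m W = 1%:M ->
  (ctmx (W *m (delta_mx k 0 : 'cV[C]_n)) *m (W *m (delta_mx k 0 : 'cV[C]_n))) 0 0 = 1.
Proof.
move=> WU; rewrite ctmxM mulmxA -(mulmxA _ (ctmx W)) WU mulmx1.
by have := form_delta 1%:M k k; rewrite mulmx1 => ->; rewrite mxE eqxx.
Qed.

Lemma mx11_mulE (P Q : 'M[C]_1) : (P *m Q) 0 0 = P 0 0 * Q 0 0.
Proof. by rewrite !mxE big_ord1. Qed.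

Lemma conj_of_real_parts (a b : C) :
  a + b \is Num.real -> 'i * (a - b) \is Num.real -> b = a^*.
Proof.
move=> /conj_Creal e1 /conj_Creal e2.
rewrite rmorphD /= in e1; rewrite rmorphM rmorphB /= conjCi in e2.
have ii : 'i * 'i = - 1 :> C by rewrite -expr2 sqrCi.
have e3 : a^* - b^* = b - a.
  have := congr1 (fun x => 'i * x) e2.
  by rewrite /= !mulrA mulrN ii opprK mul1r => ->; ring.
have two : (2 : C) != 0 by rewrite pnatr_eq0.
apply: (mulfI two); have -> : 2 * b = (a + b) + (b - a) by ring.
by rewrite -e1 -e3; ring.
Qed.

Lemma mulmx_entry_sqr_le m p q (A : 'M[C]_(m, p)) (B : 'M[C]_(p, q)) i j :
  `|(A *m B) i j| ^+ 2 <= (A *m ctmx A) i i * (ctmx B *m B) j j.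
Proof.
have [CS _] := CauchySchwarz (@dotmx C p) (row i A) (row j (ctmx B)).
have -> : (A *m B) i j = dotmx (row i A) (row j (ctmx B)).
  by rewrite dotmxE !mxE; apply: eq_bigr => k _; rewrite !mxE conjCK.
have -> : (A *m ctmx A) i i = dotmx (row i A) (row i A).
  by rewrite dotmxE !mxE; apply: eq_bigr => k _; rewrite !mxE.
have -> : (ctmx B *m B) j j = dotmx (row j (ctmx B)) (row j (ctmx B)).
  by rewrite dotmxE !mxE; apply: eq_bigr => k _; rewrite !mxE conjCK mulrC.
exact: CS.
Qed.

End ConjTranspose.

Section Spectral.
Variables (C : numClosedFieldType) (n : nat).
Implicit Types (M N W : 'M[C]_n) (d : 'rV[C]_n).

Lemma hermitian_unitary_diag N : ctmx N = N ->
  exists W d, [/\ ctmx W *m W = 1%:M, W *m ctmx W = 1%:M & N = W *m diag_mx d *m ctmx W].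
Proof.
move=> Nherm.
have Nnormal : N \is normalmx by apply/normalmxP; rewrite -ctmx_trmxC Nherm.
have PU := spectral_unitarymx N.
have := orthomx_spectralP Nnormal; rewrite invmx_unitary // => NE.
exists (ctmx (spectralmx N)), (spectral_diag N); rewrite ctmxK; split.
- by move/unitarymxP: PU; rewrite -ctmx_trmxC.
- by move: PU; rewrite -trmxC_unitary => /unitarymxP; rewrite -!ctmx_trmxC ctmxK.
- by rewrite {1}NE -ctmx_trmxC.
Qed.

Lemma char_poly_unitary_conj W M : ctmx W *m W = 1%:M -> W *m ctmx W = 1%:M ->
  char_poly (W *m M *m ctmx W) = char_poly M.
Proof.
move=> WU1 WU2; rewrite /char_poly /char_poly_mx.
set f := map_mx (@polyC C).
have -> : 'X%:M - f (W *m M *m ctmx W) = f W *m ('X%:M - f M) *m f (ctmx W).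
  rewrite mulmxBr mulmxBl /f !map_mxM; congr (_ - _).
  by rewrite scalar_mxC -mulmxA -map_mxM WU2 map_mx1 mulmx1.
by rewrite !det_mulmx mulrC mulrA -det_mulmx -map_mxM WU1 map_mx1 det1 mul1r.
Qed.

Lemma eigs_unitary_diag W d : ctmx W *m W = 1%:M -> W *m ctmx W = 1%:M ->
  perm_eq (eigs (W *m diag_mx d *m ctmx W)) [seq d 0 i | i <- enum 'I_n].
Proof.
move=> WU1 WU2; apply: prod_XsubC_eq.
rewrite /eigs; case: closed_field_poly_normal => r /=.
rewrite char_poly_unitary_conj // (monicP (char_poly_monic _)) scale1r => <-.
rewrite char_poly_trig ?diag_mx_is_trig // big_map big_enum /=.
by apply: eq_bigr => i _; rewrite mxE eqxx mulr1n.
Qed.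

Lemma gram_unitary_diag (X : 'M[C]_n) : exists W d,
  [/\ ctmx W *m W = 1%:M, W *m ctmx W = 1%:M, ctmx X *m X = W *m diag_mx d *m ctmx W,
      forall k, 0 <= d 0 k & trnorm X = \sum_i sqrtC (d 0 i)].
Proof.
have [W [d [WU1 WU2 XE]]] : exists W d, [/\ ctmx W *m W = 1%:M, W *m ctmx W = 1%:M &
    ctmx X *m X = W *m diag_mx d *m ctmx W].
  by apply: hermitian_unitary_diag; rewrite ctmxM ctmxK.
exists W, d; split => //; last first.
  by rewrite /trnorm XE (perm_big _ (eigs_unitary_diag d WU1 WU2)) big_map big_enum.
move=> k; have : ctmx (X *m W) *m (X *m W) = diag_mx d.
  by rewrite ctmxM -mulmxA (mulmxA (ctmx X)) XE !mulmxA WU1 mul1mx -mulmxA WU1 mulmx1.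
move/(congr1 (fun M : 'M[C]_n => M k k)).
by rewrite [diag_mx d k k]mxE eqxx mulr1n => <-; apply: gram_diag_ge0.
Qed.

End Spectral.

Section TraceNorm.
Variables (C : numClosedFieldType) (n : nat).
Implicit Types G X Y : 'M[C]_n.

(* [1 - G G^*] is positive semidefinite, i.e. [G] has operator norm at most 1. *)
Definition contraction G := exists V : 'M[C]_n, 1%:M - G *m ctmx G = V *m ctmx V.

Lemma trnorm_ge0 X : 0 <= trnorm X.
Proof.
have [W [d [_ _ _ d_ge0 ->]]] := gram_unitary_diag X.
by apply: sumr_ge0 => i _; rewrite sqrtC_ge0.
Qed.

Lemma norm_tr_contraction_le G X : contraction G -> `|\tr (G *m X)| <= trnorm X.
Proof.
move=> [V GV].
have [W [d [WU1 WU2 XE d_ge0 ->]]] := gram_unitary_diag X.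
set A := ctmx W *m G; set B := X *m W.
have -> : \tr (G *m X) = \tr (A *m B).
  by rewrite [RHS]mxtrace_mulC -mulmxA (mulmxA W) WU2 mul1mx mxtrace_mulC.
have BB : ctmx B *m B = diag_mx d.
  by rewrite ctmxM -mulmxA (mulmxA (ctmx X)) XE !mulmxA WU1 mul1mx -mulmxA WU1 mulmx1.
set U := ctmx V *m W.
have AA : A *m ctmx A = 1%:M - ctmx U *m U.
  rewrite /A /U !ctmxM !ctmxK !mulmxA -(mulmxA (ctmx W)) -(mulmxA _ V).
  have -> : G *m ctmx G = 1%:M - V *m ctmx V by rewrite -GV opprB addrC subrK.
  by rewrite mulmxBr mulmx1 mulmxBl WU1.
rewrite /mxtrace; apply: le_trans (ler_norm_sum _ _ _) _; apply: ler_sum => k _.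
have entry_le : `|(A *m B) k k| ^+ 2 <= d 0 k.
  apply: le_trans (mulmx_entry_sqr_le A B k k) _.
  rewrite BB AA [diag_mx d k k]mxE eqxx mulr1n ler_piMl //.
  by rewrite !mxE eqxx mulr1n gerBl; have := gram_diag_ge0 U k; rewrite mxE.
by rewrite -(sqrCK (normr_ge0 _)) ler_sqrtC // nnegrE ?exprn_ge0.
Qed.

(* The contraction [W diag(d^(-1/2)) W^* X^*] attains the bound. *)
Lemma trnorm_attained X : exists G, contraction G /\ \tr (G *m X) = trnorm X.
Proof.
have [W [d [WU1 WU2 XE d_ge0 ->]]] := gram_unitary_diag X.
pose e := \row_k (sqrtC (d 0 k))^-1.
have e_conj : map_mx Num.conj e = e.
  apply/matrixP=> i j; rewrite !mxE conj_Creal //.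
  by apply: ger0_real; rewrite invr_ge0 sqrtC_ge0.
have dE : ctmx W *m ctmx X *m X *m W = diag_mx d.
  by rewrite -(mulmxA (ctmx W)) XE !mulmxA WU1 mul1mx -mulmxA WU1 mulmx1.
exists (W *m diag_mx e *m ctmx W *m ctmx X); split; last first.
  rewrite -!mulmxA mxtrace_mulC !mulmxA.
  have -> : diag_mx e *m ctmx W *m ctmx X *m X *m W = diag_mx e *m diag_mx d.
    by rewrite -dE !mulmxA.
  by rewrite diag_mxM mxtrace_diag; apply: eq_bigr => k _; rewrite !mxE sqrtCV_mul.
pose g := \row_k ((d 0 k == 0)%:R : C).
exists (W *m diag_mx g).
have -> : W *m diag_mx e *m ctmx W *m ctmx X *m ctmx (W *m diag_mx e *m ctmx W *m ctmx X)
    = W *m (diag_mx e *m (ctmx W *m ctmx X *m X *m W) *m diag_mx e) *m ctmx W.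
  by rewrite !ctmxM !ctmxK ctmx_diag e_conj !mulmxA.
rewrite dE !diag_mxM ctmxM ctmx_diag !mulmxA.
have -> : (1%:M : 'M[C]_n) = W *m 1%:M *m ctmx W by rewrite mulmx1 WU2.
rewrite -mulmxBl -mulmxBr -(mulmxA W (diag_mx g)); congr (_ *m _ *m _).
rewrite diag_mxM; apply/matrixP=> i j; rewrite !mxE.
have [->|ne] := eqVneq i j; last by rewrite !mulr0n subr0.
rewrite !mulr1n; have [d0|dn0] := eqVneq (d 0 j) 0.
  by rewrite d0 sqrtC0 invr0 !mul0r subr0 /= mulr1n rmorph1 mulr1.
rewrite /= mulr0n rmorph0 mulr0 mulrAC -invfM -expr2 sqrtCK mulVf // subrr //.
Qed.

Lemma trnormD X Y : trnorm (X + Y) <= trnorm X + trnorm Y.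
Proof.
have [G [Gc GE]] := trnorm_attained (X + Y).
rewrite -[trnorm _]ger0_norm ?trnorm_ge0 // -GE mulmxDr mxtraceD.
by apply: le_trans (ler_normD _ _) _; apply: lerD; apply: norm_tr_contraction_le.
Qed.

Lemma trnormZ a X : trnorm (a *: X) <= `|a| * trnorm X.
Proof.
have [G [Gc GE]] := trnorm_attained (a *: X).
rewrite -[trnorm _]ger0_norm ?trnorm_ge0 // -GE -scalemxAr mxtraceZ normrM.
by rewrite ler_wpM2l // norm_tr_contraction_le.
Qed.

End TraceNorm.

Section Norm11.
Variables (C : numClosedFieldType) (n : nat).
Implicit Types F H : mapT C n.

Lemma norm11_le_trans F a b : a <= b -> norm11_le F a -> norm11_le F b.
Proof. by move=> ab Fa s; apply: le_trans (Fa s) _; rewrite ler_wpM2r // trnorm_ge0. Qed.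

Lemma norm11_le_comp F H a b : 0 <= a ->
  norm11_le F a -> norm11_le H b -> norm11_le (compm F H) (a * b).
Proof. by move=> a0 Fa Hb s; apply: le_trans (Fa _) _; rewrite -mulrA ler_wpM2l. Qed.

Lemma norm11_le_add F H a b :
  norm11_le F a -> norm11_le H b -> norm11_le (addm F H) (a + b).
Proof. by move=> Fa Hb s; apply: le_trans (trnormD _ _) _; rewrite mulrDl lerD. Qed.

Lemma norm11_le_scale F c a :
  norm11_le F a -> norm11_le (fun x => c *: F x) (`|c| * a).
Proof. by move=> Fa s; apply: le_trans (trnormZ _ _) _; rewrite -mulrA ler_wpM2l. Qed.

Lemma norm11_le_ext F H a : (forall x, F x = H x) -> norm11_le F a -> norm11_le H a.
Proof. by move=> FH Fa s; rewrite -FH. Qed.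

Lemma norm11_le_sqm F a : 0 <= a -> norm11_le F a -> norm11_le (sqm F) (a ^+ 2).
Proof. by move=> a0 Fa; rewrite expr2; apply: norm11_le_comp. Qed.

Lemma norm11_le_anticomm F H a b : 0 <= a -> 0 <= b ->
  norm11_le F a -> norm11_le H b -> norm11_le (anticomm F H) (a * b + b * a).
Proof. by move=> a0 b0 Fa Hb; apply: norm11_le_add; apply: norm11_le_comp. Qed.

Lemma norm11_le_regauge (S Si X : mapT C n) lam a s si : 1 <= lam ->
  0 <= a -> 0 <= s -> 0 <= si -> norm11_le S s -> norm11_le Si si -> norm11_le X a ->
  norm11_le (fun rho => lam^-1 *: S (X (Si rho))) (s * (a * si)).
Proof.
move=> lam_ge1 a0 s0 si0 Ss Ssi Xa.
have lam_gt0 : 0 < lam := lt_le_trans ltr01 lam_ge1.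
have := norm11_le_scale lam^-1 (norm11_le_comp s0 Ss (norm11_le_comp a0 Xa Ssi)).
apply: norm11_le_trans; rewrite ger0_norm; last by rewrite invr_ge0 ltW.
by apply: ler_piMl; rewrite ?mulr_ge0 ?invf_le1.
Qed.

End Norm11.

Section LinearMaps.
Variables (C : numClosedFieldType) (n : nat).
Implicit Types F H : mapT C n.

Lemma lin_map0 F : lin_map F -> F 0 = 0.
Proof.
move=> Flin; have := Flin 1 0 0; rewrite !scale1r addr0 => F0.
by apply: (@addrI _ (F 0)); rewrite addr0 -F0.
Qed.

Lemma lin_mapD F : lin_map F -> forall x y, F (x + y) = F x + F y.
Proof. by move=> Flin x y; have := Flin 1 x y; rewrite !scale1r. Qed.

Lemma lin_mapZ F : lin_map F -> forall a x, F (a *: x) = a *: F x.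
Proof. by move=> Flin a x; rewrite -[a *: x]addr0 Flin lin_map0 // addr0. Qed.

Lemma lin_map_sum F : lin_map F -> forall I (r : seq I) (P : pred I) (f : I -> 'M[C]_n),
  F (\sum_(i <- r | P i) f i) = \sum_(i <- r | P i) F (f i).
Proof.
move=> Flin I r P f; elim/big_rec2: _ => [|i y1 y2 _ <-]; first exact: lin_map0.
exact: lin_mapD.
Qed.

Lemma lin_map_comp F H : lin_map F -> lin_map H -> lin_map (compm F H).
Proof. by move=> Flin Hlin a x y; rewrite /compm Hlin Flin. Qed.

Lemma lin_map_add F H : lin_map F -> lin_map H -> lin_map (addm F H).
Proof. by move=> Flin Hlin a x y; rewrite /addm Flin Hlin scalerDr addrACA. Qed.

End LinearMaps.

Section CompletelyPositive.
Variables (C : numClosedFieldType) (n : nat).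
Implicit Types (F : mapT C n) (G M Q V X : 'M[C]_n).

Local Notation e_ k := (delta_mx k 0 : 'cV[C]_n).

Lemma sum_form_delta M Q V :
  \sum_j (ctmx (M *m e_ j) *m Q *m (V *m e_ j)) 0 0 = \tr (ctmx M *m Q *m V).
Proof.
apply: eq_bigr => j _.
by rewrite ctmxM !mulmxA -(mulmxA _ (ctmx M)) -(mulmxA _ (ctmx M *m Q)) -(form_delta _ j j) !mulmxA.
Qed.

Lemma psd_tr_conj Q V : psd Q -> 0 <= \tr (ctmx V *m Q *m V).
Proof. by move=> Qpsd; rewrite -sum_form_delta; apply: sumr_ge0 => j _; apply: Qpsd. Qed.

Lemma psd_tr_ge0 Q : psd Q -> 0 <= \tr Q.
Proof. by move=> /(psd_tr_conj 1%:M); rewrite ctmx1 mul1mx mulmx1. Qed.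

Lemma psdD Q1 Q2 : psd Q1 -> psd Q2 -> psd (Q1 + Q2).
Proof.
move=> Q1psd Q2psd v; have := Q1psd v; have := Q2psd v.
by rewrite -!trace_mx11 mulmxDr mulmxDl mxtraceD => h2 h1; apply: addr_ge0.
Qed.

Lemma psd_rank1 (v : 'cV[C]_n) : psd (v *m ctmx v).
Proof.
move=> w; rewrite mulmxA -mulmxA -trace_mx11 mxtrace_mulC trace_mx11.
have -> : ctmx v *m w = ctmx (ctmx w *m v) by rewrite ctmxM ctmxK.
exact: gram_diag_ge0.
Qed.

Definition positive_map F := forall X, psd X -> psd (F X).

Lemma CP_positive_map F : CP F -> positive_map F.
Proof.
move=> [_ Fcp] X Xpsd v.
have Xblock : psd_block (fun _ _ : 'I_1 => X).
  by move=> w; rewrite !big_ord1; apply: Xpsd.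
by have := Fcp 1 _ Xblock (fun _ => v); rewrite !big_ord1.
Qed.

Lemma positive_map_comp F H : positive_map F -> positive_map H -> positive_map (compm F H).
Proof. by move=> Fpos Hpos X /Hpos /Fpos. Qed.

Lemma positive_map_add F H : positive_map F -> positive_map H -> positive_map (addm F H).
Proof. by move=> Fpos Hpos X Xpsd; apply: psdD; [apply: Fpos|apply: Hpos]. Qed.

Lemma psd_block_rank1 (a b : 'cV[C]_n) :
  psd_block (fun i j : 'I_2 => (if val i == 0 then a else b) *m
                               ctmx (if val j == 0 then a else b))%N.
Proof.
move=> v; set c := fun i : 'I_2 => if (val i == 0)%N then a else b.
pose s i := (ctmx (c i) *m v i) 0 0.
have sE i j : (ctmx (v i) *m (c i *m ctmx (c j)) *m v j) 0 0 = (s i)^* * s j.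
  by rewrite mulmxA -mulmxA mx11_mulE /s -ctmxE ctmxM ctmxK.
under eq_bigr do under eq_bigr do rewrite sE.
by rewrite -big_distrlr /= -rmorph_sum mulrC mul_conjC_ge0.
Qed.

Lemma tr_contraction_conj_le G Q : contraction G -> psd Q ->
  \tr (ctmx G *m Q *m G) <= \tr Q.
Proof.
move=> [V GV] Qpsd; rewrite mxtrace_mulC mulmxA.
have -> : G *m ctmx G = 1%:M - V *m ctmx V by rewrite -GV opprB addrC subrK.
rewrite mulmxBl mul1mx raddfB /= -mulmxA mxtrace_mulC gerBl.
exact: psd_tr_conj.
Qed.

(* Positivity of the image of the block matrix [[a a^*, a b^*]; [b a^*, b b^*]],
   tested against the vectors [(-th e_j, G e_j)] and summed over [j]. *)
Lemma CP_rank1_form F G (a b : 'cV[C]_n) th : CP F -> th^* * th = 1 ->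
  0 <= \tr (F (a *m ctmx a)) - th^* * \tr (F (a *m ctmx b) *m G)
       - th * \tr (ctmx G *m F (b *m ctmx a)) + \tr (ctmx G *m F (b *m ctmx b) *m G).
Proof.
move=> Fcp th1; have Fblock := Fcp.2 2%N _ (psd_block_rank1 a b).
set P := F (a *m ctmx a); set Z := F (a *m ctmx b).
set Z' := F (b *m ctmx a); set Q := F (b *m ctmx b).
have pair_form (x y : 'cV[C]_n) : 0 <= (ctmx x *m P *m x) 0 0 + (ctmx x *m Z *m y) 0 0
    + ((ctmx y *m Z' *m x) 0 0 + (ctmx y *m Q *m y) 0 0).
  have := Fblock (fun i : 'I_2 => if val i == 0 then x else y)%N.
  by rewrite !big_ord_recl !big_ord0 !addr0.
have := @sumr_ge0 _ _ (index_enum 'I_n) xpredT _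
  (fun j _ => pair_form ((- th)%:M *m e_ j) (G *m e_ j)).
rewrite !big_split /= !sum_form_delta.
rewrite !ctmx_scalar !mul_mx_scalar !mul_scalar_mx -!scalemxAl !mxtraceZ rmorphN.
have thK z : - th * (- th^* * z) = z by rewrite mulrA mulrNN [th * _]mulrC th1 mul1r.
rewrite thK mxtrace_mulC => /le_trans; apply; rewrite le_eqVlt; apply/orP; left.
by apply/eqP; rewrite [\tr (G *m _)]mxtrace_mulC; ring.
Qed.

(* The cases [th = 1] and [th = 'i] of [CP_rank1_form] show that the two
   cross terms are conjugate; then [th = al / |al|] yields [2 |al|]. *)
Lemma CPTP_rank1_le F G (a b : 'cV[C]_n) : CP F -> trace_preserving F ->
  contraction G ->
  `|\tr (G *m F (a *m ctmx b))| *+ 2 <= (ctmx a *m a) 0 0 + (ctmx b *m b) 0 0.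
Proof.
move=> Fcp Ftp Gc.
have form th := @CP_rank1_form F G a b th Fcp.
have trP : \tr (F (a *m ctmx a)) = (ctmx a *m a) 0 0.
  by rewrite Ftp mxtrace_mulC trace_mx11.
have trQ : \tr (F (b *m ctmx b)) = (ctmx b *m b) 0 0.
  by rewrite Ftp mxtrace_mulC trace_mx11.
have Qpsd : psd (F (b *m ctmx b)) := CP_positive_map Fcp (psd_rank1 b).
move: form; rewrite mxtrace_mulC trP.
set al := \tr (G *m _); set be := \tr (ctmx G *m _); set t := \tr (ctmx G *m _ *m G).
move=> form; set A := (ctmx a *m a) 0 0.
have t_le : t <= (ctmx b *m b) 0 0 by rewrite -trQ tr_contraction_conj_le.
have At_real : A + t \is Num.real.
  by rewrite rpredD ?ger0_real ?gram_diag_ge0 // (psd_tr_conj G Qpsd).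
have form1 : 0 <= A - al - be + t.
  by have := form 1; rewrite rmorph1 !mul1r => /(_ erefl).
have formi : 0 <= A + 'i * al - 'i * be + t.
  have ii : (- 'i) * 'i = 1 :> C by rewrite mulNr -expr2 sqrCi opprK.
  by have := form 'i; rewrite conjCi ii mulNr opprK => /(_ erefl).
have sum_real : al + be \is Num.real.
  have -> : al + be = (A + t) - (A - al - be + t) by ring.
  by rewrite rpredB // ger0_real.
have diff_real : 'i * (al - be) \is Num.real.
  have -> : 'i * (al - be) = (A + 'i * al - 'i * be + t) - (A + t) by ring.
  by rewrite rpredB // ger0_real.
have beE := conj_of_real_parts sum_real diff_real.
have [->|al_neq0] := eqVneq al 0; first by rewrite normr0 mul0rn addr_ge0 ?gram_diag_ge0.
have nal_neq0 : `|al| != 0 by rewrite normr_eq0.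
have conj_al : (al / `|al|)^* * al = `|al|.
  by rewrite fmorph_div /= conj_normC mulrAC [al^* * al]mulrC -normCK expr2 mulfK.
have al_conj : al / `|al| * al^* = `|al| by rewrite mulrAC -normCK expr2 mulfK.
have form_al : 0 <= A - `|al| - `|al| + t.
  by have := form (al / `|al|); rewrite conj_al beE al_conj; apply; rewrite mulrA conj_al mulfV.
rewrite mulr2n; apply: le_trans (_ : _ <= A + t) _; last by rewrite lerD2l.
by rewrite -subr_ge0 (_ : _ - _ = A - `|al| - `|al| + t) //; ring.
Qed.

Lemma balanced_rank1_decomposition X : exists a b : 'I_n -> 'cV[C]_n,
  [/\ X = \sum_k a k *m ctmx (b k),
      forall k, (ctmx (a k) *m a k) 0 0 = (ctmx (b k) *m b k) 0 0
    & trnorm X = \sum_k (ctmx (a k) *m a k) 0 0].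
Proof.
have [W [d [WU1 WU2 XE d_ge0 ->]]] := gram_unitary_diag X.
pose t k := sqrtC (sqrtC (d 0 k)).
have t_real k : t k \is Num.real by rewrite ger0_real // !sqrtC_ge0.
have XW_gram k : (ctmx (X *m W *m e_ k) *m (X *m W *m e_ k)) 0 0 = d 0 k.
  rewrite ctmxM mulmxA -(mulmxA _ (ctmx (X *m W))) form_delta ctmxM -mulmxA.
  by rewrite (mulmxA (ctmx X)) XE !mulmxA WU1 mul1mx -mulmxA WU1 mulmx1 mxE eqxx.
have XW_eq0 k : t k = 0 -> X *m W *m e_ k = 0.
  by move=> /eqP; rewrite !sqrtC_eq0 => /eqP d0; apply: cV_gram_eq0; rewrite XW_gram.
have X_sum : X = \sum_k (X *m W *m e_ k) *m ctmx (W *m e_ k).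
  rewrite {1}(_ : X = X *m W *m 1%:M *m ctmx W); last by rewrite mulmx1 -mulmxA WU2 mulmx1.
  rewrite mx1_sum_delta mulmx_sumr mulmx_suml; apply: eq_bigr => k _.
  by rewrite ctmxM ctmx_delta !mulmxA -(mulmxA _ _ (delta_mx 0 k)) mul_delta_mx.
exists (fun k => (t k)^-1 *: (X *m W *m e_ k)), (fun k => t k *: (W *m e_ k)).
have gram_a k : (ctmx ((t k)^-1 *: (X *m W *m e_ k)) *m ((t k)^-1 *: (X *m W *m e_ k))) 0 0
    = sqrtC (d 0 k).
  by rewrite gramZ XW_gram conj_Creal ?rpredV // -invfM -expr2 sqrtCK sqrtCV_mul.
have gram_b k : (ctmx (t k *: (W *m e_ k)) *m (t k *: (W *m e_ k))) 0 0 = sqrtC (d 0 k).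
  by rewrite gramZ form_unit_delta // conj_Creal // mulr1 -expr2 sqrtCK.
split=> [|k|]; last by apply: eq_bigr => k _; rewrite gram_a.
- rewrite {1}X_sum; apply: eq_bigr => k _.
  rewrite ctmxZ conj_Creal // -scalemxAl -scalemxAr scalerA.
  have [t0|tn0] := eqVneq (t k) 0; last by rewrite mulVf // scale1r.
  by rewrite XW_eq0 // !mul0mx scaler0.
- by rewrite gram_a gram_b.
Qed.

Lemma CPTP_trnorm_le F X : CP F -> trace_preserving F -> trnorm (F X) <= trnorm X.
Proof.
move=> Fcp Ftp; have [G [Gc GE]] := trnorm_attained (F X).
have [a [b [XE abE ->]]] := balanced_rank1_decomposition X.
rewrite -[trnorm _]ger0_norm ?trnorm_ge0 // -GE XE (lin_map_sum Fcp.1) mulmx_sumr.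
rewrite raddf_sum /=; apply: le_trans (ler_norm_sum _ _ _) _; apply: ler_sum => k _.
by have := CPTP_rank1_le (a k) (b k) Fcp Ftp Gc; rewrite -abE -mulr2n lerMn2r.
Qed.

End CompletelyPositive.

Section DualEigenvalue.
Variables (C : numClosedFieldType) (n : nat).
Implicit Types (F T R : mapT C n) (M X : 'M[C]_n) (v x y : 'cV[C]_n).

Local Notation e_ k := (delta_mx k 0 : 'cV[C]_n).

Lemma form_addZ M x y c :
  (ctmx (x + c *: y) *m M *m (x + c *: y)) 0 0 =
  (ctmx x *m M *m x) 0 0 + c * (ctmx x *m M *m y) 0 0 + c^* * (ctmx y *m M *m x) 0 0
  + c^* * c * (ctmx y *m M *m y) 0 0.
Proof.
rewrite -!trace_mx11 ctmxD ctmxZ !mulmxDl !mulmxDr.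
by rewrite -!scalemxAl -!scalemxAr !mxtraceD !mxtraceZ; ring.
Qed.

Lemma hermitian_of_real_form M :
  (forall v, (ctmx v *m M *m v) 0 0 \is Num.real) -> ctmx M = M.
Proof.
move=> Mreal; apply/matrixP=> i j; rewrite ctmxE.
have Mii : M i i \is Num.real by have := Mreal (e_ i); rewrite form_delta.
have Mjj : M j j \is Num.real by have := Mreal (e_ j); rewrite form_delta.
have := Mreal (e_ i + 1 *: e_ j); rewrite form_addZ !form_delta rmorph1 !mul1r => M1.
have := Mreal (e_ i + 'i *: e_ j); rewrite form_addZ !form_delta conjCi.
rewrite (_ : - 'i * 'i = 1) ?mul1r => [Mi|]; last by rewrite mulNr -expr2 sqrCi opprK.
apply/esym; apply: conj_of_real_parts.
  have -> : M j i + M i j = (M i i + M i j + M j i + M j j) - M j j - M i i by ring.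
  by rewrite !rpredB.
have -> : 'i * (M j i - M i j) = (M i i + M j j) - (M i i + 'i * M i j + - 'i * M j i + M j j).
  by ring.
by apply: rpredB => //; apply: rpredD.
Qed.

Lemma posdef_min_eigen xi : (0 < n)%N -> posdef xi ->
  exists v (V : 'M[C]_n) m, [/\ (ctmx v *m v) 0 0 = 1, (ctmx v *m xi *m v) 0 0 = m, 0 < m
                  & xi = V *m ctmx V + m%:M].
Proof.
move=> n_gt0 xi_pd.
have xi_herm : ctmx xi = xi.
  apply: hermitian_of_real_form => v; have [->|v_neq0] := eqVneq v 0.
    by rewrite mulmx0 mxE.
  exact/ger0_real/ltW/xi_pd.
have [W [d [WU1 WU2 xiE]]] := hermitian_unitary_diag xi_herm.
have xi_form k : (ctmx (W *m e_ k) *m xi *m (W *m e_ k)) 0 0 = d 0 k.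
  rewrite ctmxM xiE !mulmxA -(mulmxA _ (ctmx W) W) WU1 mulmx1.
  by rewrite -(mulmxA _ (ctmx W) W) WU1 mulmx1 form_delta mxE eqxx.
have d_gt0 k : 0 < d 0 k.
  rewrite -xi_form; apply: xi_pd; apply/eqP => We0.
  by have := form_unit_delta k WU1; rewrite We0 ctmx0 mul0mx mxE => /eqP; rewrite eq_sym oner_eq0.
have [k _ kmin] := @real_arg_minP _ _ (Ordinal n_gt0) xpredT (fun i => d 0 i) isT
  (fun i _ => gtr0_real (d_gt0 i)).
exists (W *m e_ k), (W *m diag_mx (\row_i sqrtC (d 0 i - d 0 k))), (d 0 k).
split=> //; first exact: form_unit_delta.
rewrite ctmxM ctmx_diag mulmxA -(mulmxA W) diag_mxM.
have -> : (d 0 k)%:M = W *m (d 0 k)%:M *m ctmx W :> 'M[C]_n.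
  by rewrite -scalemx1 -scalemxAr -scalemxAl mulmx1 WU2.
rewrite -mulmxDl -mulmxDr xiE; congr (_ *m _ *m _).
apply/matrixP=> i j; rewrite !mxE.
have [->|ne] := eqVneq i j; last by rewrite !mulr0n addr0.
by rewrite !mulr1n conj_Creal ?sqrtC_real ?subr_ge0 ?kmin // -expr2 sqrtCK subrK.
Qed.

Lemma dualm_form F Y v : lin_map F ->
  (ctmx v *m dualm F Y *m v) 0 0 = \tr (Y *m F (v *m ctmx v)).
Proof.
move=> Flin.
rewrite {1}(matrix_sum_delta (v *m ctmx v)) (lin_map_sum Flin) mulmx_sumr raddf_sum /=.
under [RHS]eq_bigr do rewrite (lin_map_sum Flin) mulmx_sumr raddf_sum /=.
under [RHS]eq_bigr do under eq_bigr do rewrite (lin_mapZ Flin) -scalemxAr mxtraceZ.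
rewrite mxE; apply: eq_bigr => j _; rewrite mxE mulr_suml; apply: eq_bigr => i _.
by rewrite !mxE big_ord1 !mxE; ring.
Qed.

(* Test the eigen-equation on the projector [P] onto a least eigenvector of [xi]:
   [lam m = tr(xi F(P)) >= m tr(F(P)) >= m tr(T(P)) = m]. *)
Lemma dual_eigenvalue_ge1 F T R lam xi : lin_map F ->
  (forall X, F X = T X + R X) -> (forall X, \tr (T X) = \tr X) ->
  positive_map T -> positive_map R ->
  (0 < n)%N -> posdef xi -> dualm F xi = lam *: xi -> 1 <= lam.
Proof.
move=> Flin FE Ttp Tpos Rpos n_gt0 xi_pd xi_eig.
have [v [V [m [v_unit v_form m_gt0 xiE]]]] := posdef_min_eigen n_gt0 xi_pd.
have vv_psd := psd_rank1 v.
have Fvv_psd : psd (F (v *m ctmx v)) by rewrite FE; apply: psdD; [apply: Tpos|apply: Rpos].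
have lamE : lam * m = \tr (xi *m F (v *m ctmx v)).
  by rewrite -dualm_form // xi_eig -scalemxAr -scalemxAl mxE v_form.
have tr_ge1 : 1 <= \tr (F (v *m ctmx v)).
  rewrite FE mxtraceD Ttp mxtrace_mulC trace_mx11 v_unit lerDl.
  exact/psd_tr_ge0/Rpos.
rewrite -(ler_pM2r m_gt0) lamE mul1r.
apply: le_trans (_ : _ <= m * \tr (F (v *m ctmx v))) _; first by rewrite ler_pMr.
rewrite xiE mulmxDl mxtraceD mul_scalar_mx mxtraceZ lerDr -mulmxA mxtrace_mulC.
exact: psd_tr_conj.
Qed.

End DualEigenvalue.

Lemma eigenvalue_dim_gt0 (C : numClosedFieldType) n (F : mapT C n) l :
  is_eigenvalue F l -> (0 < n)%N.
Proof. by case: n F => // F [X [X_neq0 _]]; rewrite flatmx0 eqxx in X_neq0. Qed.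

Section DoubleStep.
Variables (C : numClosedFieldType) (n : nat) (A B C' D' : mapT C n).

Definition double_step_A := addm (sqm (addm (sqm A) (sqm B))) (sqm (addm (sqm C') (sqm D'))).
Definition double_step_B := addm (sqm (anticomm A B)) (sqm (anticomm C' D')).
Definition double_step_C := anticomm (addm (sqm A) (sqm B)) (addm (sqm C') (sqm D')).
Definition double_step_D := anticomm (anticomm A B) (anticomm C' D').

Definition double_step_A_rest :=
  addm (addm (addm (compm (sqm A) (sqm B)) (compm (sqm B) (sqm A))) (sqm (sqm B)))
       (sqm (addm (sqm C') (sqm D'))).

Lemma double_step_A_split : lin_map A -> lin_map B ->
  forall x, double_step_A x = sqm (sqm A) x + double_step_A_rest x.
Proof.
move=> Alin Blin x; rewrite /double_step_A /double_step_A_rest /addm /sqm /compm.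
by rewrite !(lin_mapD Alin) !(lin_mapD Blin) !addrA.
Qed.

Lemma double_step_A_sub : lin_map A -> lin_map B ->
  forall x, subm double_step_A (sqm (sqm A)) x = double_step_A_rest x.
Proof. by move=> Alin Blin x; rewrite /subm double_step_A_split // addrC addKr. Qed.

Section Bounds.
Variable e : C.
Hypotheses (e_ge0 : 0 <= e) (A1 : norm11_le A 1).
Hypotheses (Be : norm11_le B e) (Ce : norm11_le C' e) (De : norm11_le D' e).

Lemma double_step_B_norm11_le : norm11_le double_step_B (4 * (e ^+ 2 + e ^+ 4)).
Proof.
rewrite (_ : 4 * _ = (1 * e + e * 1) ^+ 2 + (e * e + e * e) ^+ 2); last by ring.
by apply: norm11_le_add; apply: norm11_le_sqm; rewrite ?addr_ge0 ?mulr_ge0 //;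
  apply: norm11_le_anticomm.
Qed.

Lemma double_step_C_norm11_le : norm11_le double_step_C (4 * (e ^+ 2 + e ^+ 4)).
Proof.
rewrite (_ : 4 * _ = (1 * 1 + e * e) * (e * e + e * e) + (e * e + e * e) * (1 * 1 + e * e));
  last by ring.
by apply: norm11_le_anticomm; rewrite ?addr_ge0 ?mulr_ge0 //; apply: norm11_le_add;
  apply: norm11_le_comp.
Qed.

Lemma double_step_D_norm11_le : norm11_le double_step_D (4 * (e ^+ 2 + e ^+ 4)).
Proof.
apply: (@norm11_le_trans _ _ _ (8 * e ^+ 3)).
  rewrite -subr_ge0 (_ : _ - _ = 4 * (e * (e - 1)) ^+ 2); last by ring.
  by rewrite mulr_ge0 // real_exprn_even_ge0 // rpredM ?rpredB ?ger0_real.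
rewrite (_ : 8 * _ = (1 * e + e * 1) * (e * e + e * e) + (e * e + e * e) * (1 * e + e * 1));
  last by ring.
by apply: norm11_le_anticomm; rewrite ?addr_ge0 ?mulr_ge0 //; apply: norm11_le_anticomm.
Qed.

Lemma double_step_A_rest_norm11_le :
  norm11_le double_step_A_rest (2 * e ^+ 2 + 5 * e ^+ 4).
Proof.
have A2 : norm11_le (sqm A) (1 * 1) by apply: norm11_le_comp.
have B2 : norm11_le (sqm B) (e * e) by apply: norm11_le_comp.
have CD2 : norm11_le (addm (sqm C') (sqm D')) (e * e + e * e).
  by apply: norm11_le_add; apply: norm11_le_comp.
rewrite (_ : _ + _ = 1 * 1 * (e * e) + e * e * (1 * 1) + (e * e) * (e * e)
                     + (e * e + e * e) * (e * e + e * e)); last by ring.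
have ee0 : 0 <= e * e by rewrite mulr_ge0.
apply: norm11_le_add; last by apply: norm11_le_comp; rewrite ?addr_ge0.
apply: norm11_le_add; last exact: norm11_le_comp.
by apply: norm11_le_add; apply: norm11_le_comp; rewrite ?mulr_ge0.
Qed.

End Bounds.

Lemma double_step_dual_eigenvalue_ge1 lam xi : CP A -> trace_preserving A ->
  CP B -> CP C' -> CP D' -> (0 < n)%N -> posdef xi ->
  dualm double_step_A xi = lam *: xi -> 1 <= lam.
Proof.
move=> Acp Atp Bcp Ccp Dcp n_gt0 xi_pd xi_eig.
have A2pos := positive_map_comp (CP_positive_map Acp) (CP_positive_map Acp).
have B2pos := positive_map_comp (CP_positive_map Bcp) (CP_positive_map Bcp).
have Cpos := CP_positive_map Ccp; have Dpos := CP_positive_map Dcp.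
apply: (dual_eigenvalue_ge1 (T := sqm (sqm A)) (R := double_step_A_rest)
  _ _ _ _ _ n_gt0 xi_pd xi_eig).
- have [[Alin _] [Blin _]] := (Acp, Bcp); have [[Clin _] [Dlin _]] := (Ccp, Dcp).
  by apply: lin_map_add; apply: lin_map_comp; apply: lin_map_add; apply: lin_map_comp.
- exact: double_step_A_split Acp.1 Bcp.1.
- by move=> X; rewrite /sqm /compm !Atp.
- exact: positive_map_comp.
- have CD2pos : positive_map (addm (sqm C') (sqm D')).
    by apply: positive_map_add; apply: positive_map_comp.
  by apply: positive_map_add; [apply: positive_map_add; [apply: positive_map_add|]|];
    apply: positive_map_comp.
Qed.

End DoubleStep.

Lemma max3_ub (R : numDomainType) (x y z : R) :
  x \is Num.real -> y \is Num.real -> z \is Num.real ->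
  [/\ x <= Num.max x (Num.max y z), y <= Num.max x (Num.max y z)
    & z <= Num.max x (Num.max y z)].
Proof.
move=> xr yr zr; have yzr := max_real yr zr.
by rewrite !(comparable_le_max _ (real_comparable _ _)) // !lexx !orbT.
Qed.

Theorem mainTheorem4 (C : numClosedFieldType) (D : nat)
  (A B C' D' : mapT C D) (nB nC nD : C)
  (hA : CP A) (hAtp : trace_preserving A)
  (hB : CP B) (hC : CP C') (hD : CP D')
  (hnB : is_norm11 B nB) (hnC : is_norm11 C' nC) (hnD : is_norm11 D' nD) :
  let eps := Num.max nB (Num.max nC nD) in
  let Ap := addm (sqm (addm (sqm A) (sqm B))) (sqm (addm (sqm C') (sqm D'))) in
  let Bp := addm (sqm (anticomm A B)) (sqm (anticomm C' D')) in
  let Cp := anticomm (addm (sqm A) (sqm B)) (addm (sqm C') (sqm D')) in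
  let Dp := anticomm (anticomm A B) (anticomm C' D') in
  [/\ (* 1 *)
      norm11_le Bp (4 * (eps ^+ 2 + eps ^+ 4)) /\
      norm11_le Cp (4 * (eps ^+ 2 + eps ^+ 4)) /\
      norm11_le Dp (4 * (eps ^+ 2 + eps ^+ 4)),
      (* 2 *)
      norm11_le (subm Ap (sqm (sqm A))) (2 * eps ^+ 2 + 5 * eps ^+ 4)
    & (* 3 *)
      forall (lam : C) (xi R : 'M[C]_D) (nS nSi : C),
        is_spectral_radius Ap lam ->
        posdef xi -> dualm Ap xi = lam *: xi ->
        psd R -> R *m R = xi ->
        let S : mapT C D := fun rho => R *m rho *m R in
        let Si : mapT C D := fun rho => invmx R *m rho *m invmx R in
        is_norm11 S nS -> is_norm11 Si nSi ->
        let new (X : mapT C D) : mapT C D :=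
          fun rho => lam^-1 *: S (X (Si rho)) in
        1 <= lam /\
        norm11_le (new Bp) (4 * (nS * nSi) * (eps ^+ 2 + eps ^+ 4)) /\
        norm11_le (new Cp) (4 * (nS * nSi) * (eps ^+ 2 + eps ^+ 4)) /\
        norm11_le (new Dp) (4 * (nS * nSi) * (eps ^+ 2 + eps ^+ 4))].
Proof.
move=> eps Ap Bp Cp Dp.
have [nB_ge0 [Bn _]] := hnB; have [nC_ge0 [Cn _]] := hnC; have [nD_ge0 [Dn _]] := hnD.
have [le_nB le_nC le_nD] := max3_ub (ger0_real nB_ge0) (ger0_real nC_ge0) (ger0_real nD_ge0).
have eps_ge0 : 0 <= eps := le_trans nB_ge0 le_nB.
have A1 : norm11_le A 1 by move=> s; rewrite mul1r CPTP_trnorm_le.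
have Beps := norm11_le_trans le_nB Bn; have Ceps := norm11_le_trans le_nC Cn.
have Deps := norm11_le_trans le_nD Dn.
have Bp_le := double_step_B_norm11_le eps_ge0 A1 Beps Ceps Deps.
have Cp_le := double_step_C_norm11_le eps_ge0 A1 Beps Ceps Deps.
have Dp_le := double_step_D_norm11_le eps_ge0 A1 Beps Ceps Deps.
split.
- by split; [exact: Bp_le|split; [exact: Cp_le|exact: Dp_le]].
- apply: (norm11_le_ext _ (double_step_A_rest_norm11_le eps_ge0 A1 Beps Ceps Deps)).
  by move=> x; rewrite (double_step_A_sub C' D' hA.1 hB.1).
- move=> lam xi R nS nSi lam_sr xi_pd xi_eig _ _ S Si [nS_ge0 [Sn _]] [nSi_ge0 [Sin _]] new.
  have [[l [l_eig _]] _] := lam_sr.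
  have lam_ge1 : 1 <= lam.
    exact: double_step_dual_eigenvalue_ge1 hA hAtp hB hC hD (eigenvalue_dim_gt0 l_eig) xi_pd xi_eig.
  have regauge X : norm11_le X (4 * (eps ^+ 2 + eps ^+ 4)) ->
      norm11_le (new X) (4 * (nS * nSi) * (eps ^+ 2 + eps ^+ 4)).
    have K_ge0 : 0 <= 4 * (eps ^+ 2 + eps ^+ 4) by rewrite mulr_ge0 ?addr_ge0 ?exprn_ge0.
    rewrite (_ : 4 * (nS * nSi) * _ = nS * (4 * (eps ^+ 2 + eps ^+ 4) * nSi)); last by ring.
    exact: norm11_le_regauge lam_ge1 K_ge0 nS_ge0 nSi_ge0 Sn Sin.
  split; first exact: lam_ge1.
  by split; [exact: regauge Bp_le|split; [exact: regauge Cp_le|exact: regauge Dp_le]].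
Qed.
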